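(* Let $n\geq 2$ and let $\mathscr{R}$ be a family of standard dyadic rectangles in $\mathbb{R}^n$. Assume there exist an integer $1\leq d\leq n-1$ and constants $c>0$ and $c'\geq 1$ (depending only on $n$ and $d$) such that, for every sufficiently large $k\in\mathbb{N}$, there exist measurable sets $\Theta_k, Y_k\subseteq\mathbb{R}^n$ with: (i) $\Theta_k\subseteq Y_k$; (ii) $|Y_k|\geq c\cdot 2^{dk}k^d|\Theta_k|$; (iii) for every $x\in Y_k$, $M_{\mathscr{R}}\chi_{\Theta_k}(x)\geq c'\,2^{-dk}$. Then for every Orlicz function $\Phi$ satisfying $\Phi=o(\Phi_d)$ at $\infty$, the operator $M_{\mathscr{R}}$ does not satisfy a weak $L^\Phi$ inequality. In particular, $M_{\mathscr{R}}$ does not satisfy a weak $(1,1)$ inequality.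
   Context: A standard rectangle in $\mathbb{R}^n$ is a set $[0,\alpha_1]\times\cdots\times[0,\alpha_n]$ with $0<\alpha_i\leq 1$; it is dyadic if each $\alpha_i=2^{-m_i}$ with $m_i\in\mathbb{N}=\{0,1,2,\dots\}$. For a family $\mathscr{R}$ of standard rectangles and measurable $f$, $M_{\mathscr{R}}f(x):=\sup\{\frac{1}{|R|}\int_{\tau(R)}|f| : R\in\mathscr{R},\ \tau \text{ a translation},\ x\in\tau(R)\}$, where $|\cdot|$ is Lebesgue measure and $\chi_A$ is the indicator of $A$. An Orlicz function is a convex increasing $\Phi:[0,\infty)\to[0,\infty)$ with $\Phi(0)=0$; $L^\Phi(\mathbb{R}^n)$ is the set of measurable $f$ with $\Phi(|f|)\in L^1$. $M_{\mathscr{R}}$ satisfies a weak $L^\Phi$ inequality if there is $C>0$ such that $|\{M_{\mathscr{R}}f>\lambda\}|\leq\int_{\mathbb{R}^n}\Phi(C|f|/\lambda)$ for all $\lambda>0$ and all $f\in L^\Phi(\mathbb{R}^n)$; weak $(1,1)$ means this with $\Phi(t)=t$. For $d>0$, $\Phi_d(t):=t(1+\log_+^d t)$, where $\log_+t=\max(\log t,0)$. *)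

From HB Require Import structures.
From mathcomp Require Import all_boot all_order all_algebra.
From mathcomp Require Import all_classical all_reals all_analysis.
Set Implicit Arguments. Unset Strict Implicit. Unset Printing Implicit Defensive.
Import Order.TTheory GRing.Theory Num.Theory.
Local Open Scope classical_set_scope.
Local Open Scope ring_scope.

Section Defs.
Variables (R : realType) (n : nat).
Implicit Types (a b t x alpha : 'rV[R]_n) (A : set 'rV[R]_n).

Definition box a b : set 'rV[R]_n :=
  [set x | forall i : 'I_n, a ord0 i <= x ord0 i <= b ord0 i].

Definition boxvol a b : R := \prod_(i < n) (b ord0 i - a ord0 i).

Definition leb_outer A : \bar R :=
  ereal_inf [set s : \bar R | exists (a b : nat -> 'rV[R]_n),
    [/\ (forall k (i : 'I_n), a k ord0 i <= b k ord0 i),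
        A `<=` \bigcup_k box (a k) (b k) &
        s = (\sum_(k <oo) (boxvol (a k) (b k))%:E)%E]].

Definition leb_measurable A : Prop :=
  forall X : set 'rV[R]_n,
    leb_outer X = (leb_outer (X `&` A) + leb_outer (X `&` ~` A))%E.

Definition leb_measurable_fun (f : 'rV[R]_n -> R) : Prop :=
  forall c : R, leb_measurable [set x | c < f x].

Definition leb_integral (g : 'rV[R]_n -> \bar R) : \bar R :=
  ereal_sup [set s : \bar R | exists (m : nat) (c : nat -> R)
      (E : nat -> set 'rV[R]_n),
    [/\ (forall i, 0 <= c i), (forall i, leb_measurable (E i)),
        (forall x, (\sum_(i < m) (c i * \1_(E i) x)%:E <= g x)%E) &
        s = (\sum_(i < m) (c i)%:E * leb_outer (E i))%E]].

(* standard rectangle [0,alpha_1] x ... x [0,alpha_n], 0 < alpha_i <= 1,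
   represented by its side-length vector alpha *)
Definition standard_rect alpha : Prop :=
  forall i : 'I_n, 0 < alpha ord0 i <= 1.

Definition dyadic_rect alpha : Prop :=
  exists m : 'I_n -> nat, forall i : 'I_n, alpha ord0 i = (2%:R ^- (m i)).

(* the maximal operator M_R: translate tau(R) of the rectangle with sides alpha
   is the box [t, t + alpha]; |R| = prod alpha_i *)
Definition max_op (Rs : set 'rV[R]_n) (f : 'rV[R]_n -> R) (x : 'rV[R]_n) : \bar R :=
  ereal_sup [set s : \bar R | exists alpha t,
    [/\ Rs alpha, box t (t + alpha) x &
        s = ((\prod_(i < n) alpha ord0 i)^-1)%:E *
            leb_integral (fun y => (`|f y| * \1_(box t (t + alpha)) y)%:E)]%E].

Definition orlicz (Phi : R -> R) : Prop :=
  [/\ Phi 0 = 0,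
      (forall s u, 0 <= s -> s <= u -> Phi s <= Phi u) &
      (forall s u l, 0 <= s -> 0 <= u -> 0 <= l <= 1 ->
          Phi (l * s + (1 - l) * u) <= l * Phi s + (1 - l) * Phi u)].

Definition weak_Lphi (Rs : set 'rV[R]_n) (Phi : R -> R) : Prop :=
  exists C : R, 0 < C /\
    forall (lam : R) (f : 'rV[R]_n -> R), 0 < lam ->
      leb_measurable_fun f ->
      (leb_integral (fun x => (Phi `|f x|)%:E) < +oo)%E ->
      (leb_outer [set x | (lam%:E < max_op Rs f x)%E] <=
        leb_integral (fun x => (Phi (C * `|f x| / lam))%:E))%E.

End Defs.

Definition logp {R : realType} (t : R) : R := Num.max (ln t) 0.
Definition Phi_d {R : realType} (d : nat) (t : R) : R := t * (1 + logp t ^+ d).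

Definition little_o_Phi_d {R : realType} (d : nat) (Phi : R -> R) : Prop :=
  forall eps : R, 0 < eps -> exists T : R, forall t : R, T <= t ->
    `|Phi t| <= eps * `|Phi_d d t|.

From HB Require Import structures.
From mathcomp Require Import all_boot all_order all_algebra.
From mathcomp Require Import all_classical all_reals all_analysis.
From mathcomp Require Import ring lra.
Set Implicit Arguments. Unset Strict Implicit. Unset Printing Implicit Defensive.
Import Order.TTheory GRing.Theory Num.Theory.
Local Open Scope classical_set_scope.
Local Open Scope ring_scope.

(* Testing a weak L^Phi inequality on f = chi_Theta_k with lambda ~ 2^-dk gives
   |Y_k| <= Phi(K 2^dk) |Theta_k| for a fixed K, hence by (ii)
   c 2^dk k^d <= Phi(K 2^dk) for all large k.  At t = K 2^dk one has
   log_+ t = O(k), so Phi_d(t) = O(2^dk k^d) and a function Phi = o(Phi_d)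
   eventually falls below c 2^dk k^d.  Weak (1,1) is the case Phi = id. *)

Section LebesgueOuter.
Variables (R : realType) (n : nat).
Implicit Types (A B X Th : set 'rV[R]_n).

Lemma leb_outer_ge0 A : (0 <= leb_outer A)%E.
Proof.
apply: le_ereal_inf_tmp => s [a [b [hab _ ->]]].
apply: nneseries_ge0 => k _ _; rewrite lee_fin.
by apply: prodr_ge0 => i _; rewrite subr_ge0.
Qed.

Lemma le_leb_outer A B : A `<=` B -> (leb_outer A <= leb_outer B)%E.
Proof.
move=> AB; apply: ereal_inf_le_tmp => s [a [b [hab hB ->]]].
by exists a, b; split => //; apply: subset_trans hB.
Qed.

Hypothesis n_gt0 : (0 < n)%N.

(* For n = 0 the empty product makes every box have volume 1. *)
Lemma leb_outer_set0 : leb_outer (set0 : set 'rV[R]_n) = 0%E.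
Proof.
apply/eqP; rewrite eq_le leb_outer_ge0 andbT.
apply: ereal_inf_lbound; exists (fun _ => 0), (fun _ => 0); split => //.
rewrite eseries0 // => k _ _.
by rewrite /boxvol (bigD1 (Ordinal n_gt0)) //= subrr mul0r.
Qed.

Lemma leb_measurable_set0 : leb_measurable (set0 : set 'rV[R]_n).
Proof. by move=> X; rewrite setI0 leb_outer_set0 add0e setC0 setIT. Qed.

Lemma leb_measurable_setT : leb_measurable (setT : set 'rV[R]_n).
Proof. by move=> X; rewrite setIT setCT setI0 leb_outer_set0 adde0. Qed.

Lemma leb_measurable_fun_indic Th :
  leb_measurable Th -> leb_measurable_fun (\1_Th).
Proof.
move=> mTh r; have [r_lt0|r_ge0] := ltrP r 0.
  rewrite (_ : [set x | r < \1_Th x] = setT); first exact: leb_measurable_setT.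
  by apply/seteqP; split => // x _ /=; rewrite indicE; apply: lt_le_trans r_lt0 _.
have [r_lt1|r_ge1] := ltrP r 1.
  rewrite (_ : [set x | r < \1_Th x] = Th) //.
  apply/seteqP; split => x /=; rewrite indicE.
    by case: (boolP (x \in Th)) => [/set_mem //|_]; rewrite ltNge r_ge0.
  by move=> Thx; rewrite mem_set.
rewrite (_ : [set x | r < \1_Th x] = set0); first exact: leb_measurable_set0.
apply/seteqP; split => x //=; rewrite indicE.
by case: (x \in Th) => /=; rewrite ltNge ?r_ge1 ?r_ge0.
Qed.

(* Induction on m, splitting X along E m by the Caratheodory property. *)
Lemma simple_le_leb_outer (m : nat) (c : nat -> R) (E : nat -> set 'rV[R]_n) :
  (forall i, 0 <= c i) -> (forall i, leb_measurable (E i)) ->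
  forall (a : R) X, 0 <= a ->
  (forall x, X x -> \sum_(i < m) c i * \1_(E i) x <= a) ->
  (\sum_(i < m) (c i)%:E * leb_outer (X `&` E i) <= a%:E * leb_outer X)%E.
Proof.
move=> c_ge0 mE; elim: m => [|m IH] a X a_ge0 hX.
  by rewrite big_ord0; apply: mule_ge0 => //; apply: leb_outer_ge0.
have sum_ge0 x : 0 <= \sum_(i < m) c i * \1_(E i) x.
  by apply: sumr_ge0 => i _; apply: mulr_ge0 => //; rewrite indicE.
have splitE (i : 'I_m) : ((c i)%:E * leb_outer (X `&` E i) =
    (c i)%:E * leb_outer ((X `&` E m) `&` E i) +
    (c i)%:E * leb_outer ((X `&` ~` E m) `&` E i))%E.
  rewrite (mE m (X `&` E i)) ge0_muleDr ?leb_outer_ge0 //.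
  by rewrite -!setIA (setIC (E i)) (setIC (E i)).
rewrite big_ord_recr /= (eq_bigr _ (fun i _ => splitE i)) big_split /= (mE m X).
have outside : (\sum_(i < m) (c i)%:E * leb_outer ((X `&` ~` E m) `&` E i) <=
    a%:E * leb_outer (X `&` ~` E m))%E.
  apply: IH => // x [Xx nEx]; have := hX x Xx.
  by rewrite big_ord_recr /= indicE memNset // mulr0 addr0.
have [cm_le_a|a_lt_cm] := lerP (c m) a; last first.
  have -> : X `&` E m = set0.
    apply/seteqP; split => // x [Xx Ex]; have := hX x Xx.
    rewrite big_ord_recr /= indicE mem_set // mulr1 => le_a.
    by have := sum_ge0 x; lra.
  rewrite leb_outer_set0 mule0 adde0 add0e big1 ?add0e // => i _.
  by rewrite set0I leb_outer_set0 mule0.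
have inside : (\sum_(i < m) (c i)%:E * leb_outer ((X `&` E m) `&` E i) <=
    (a - c m)%:E * leb_outer (X `&` E m))%E.
  apply: IH; first by rewrite subr_ge0.
  move=> x [Xx Ex]; have := hX x Xx.
  by rewrite big_ord_recr /= indicE mem_set // mulr1 lerBrDr.
have -> : (a%:E * (leb_outer (X `&` E m) + leb_outer (X `&` ~` E m)) =
    ((a - c m)%:E * leb_outer (X `&` E m) + a%:E * leb_outer (X `&` ~` E m))
    + (c m)%:E * leb_outer (X `&` E m))%E.
  rewrite ge0_muleDr ?leb_outer_ge0 // addeAC -ge0_muleDl ?lee_fin ?subr_ge0 //.
  by rewrite -EFinD subrK.
by apply: leeD => //; apply: leeD.
Qed.

Lemma le_leb_integral_support Th (a : R) (g : 'rV[R]_n -> \bar R) :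
  leb_measurable Th -> 0 <= a ->
  (forall x, Th x -> (g x <= a%:E)%E) -> (forall x, ~ Th x -> (g x <= 0)%E) ->
  (leb_integral g <= a%:E * leb_outer Th)%E.
Proof.
move=> mTh a_ge0 g_le_a g_le0.
apply: ge_ereal_sup => s [m [c [E [c_ge0 mE g_ge ->]]]].
have splitE (i : 'I_m) : ((c i)%:E * leb_outer (E i) =
    (c i)%:E * leb_outer (Th `&` E i) + (c i)%:E * leb_outer (~` Th `&` E i))%E.
  rewrite (mTh (E i)) ge0_muleDr ?leb_outer_ge0 //.
  by rewrite (setIC Th) (setIC (~` Th)).
rewrite (eq_bigr _ (fun i _ => splitE i)) big_split /=.
have -> : (a%:E * leb_outer Th = a%:E * leb_outer Th + 0%:E * leb_outer (~` Th))%E.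
  by rewrite mul0e adde0.
apply: leeD; apply: simple_le_leb_outer => // x Thx; rewrite -lee_fin -sumEFin.
  exact: le_trans (g_ge x) (g_le_a x Thx).
exact: le_trans (g_ge x) (g_le0 x Thx).
Qed.

End LebesgueOuter.

Lemma weak_Lphi_indic (R : realType) (n : nat) (Rs : set 'rV[R]_n)
    (Phi : R -> R) :
  (0 < n)%N -> Phi 0 = 0 -> (forall t, 0 <= t -> 0 <= Phi t) ->
  weak_Lphi Rs Phi ->
  exists C, 0 < C /\ forall (Th : set 'rV[R]_n) (r lam : R),
    leb_measurable Th -> leb_outer Th = r%:E -> 0 < lam ->
    (leb_outer [set x | (lam%:E < max_op Rs \1_Th x)%E] <=
      (Phi (C / lam) * r)%:E)%E.
Proof.
move=> n_gt0 Phi0 Phi_ge0 [C [C_gt0 weakC]]; exists C; split => //.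
move=> Th r lam mTh Thr lam_gt0.
have abs_indic x : `|\1_Th x| = \1_Th x :> R by rewrite ger0_norm.
have integrable : (leb_integral (fun x => (Phi `|\1_Th x|)%:E) < +oo)%E.
  apply: le_lt_trans (_ : ((Phi 1)%:E * r%:E < +oo)%E); last by rewrite -EFinM ltry.
  rewrite -Thr; apply: le_leb_integral_support => //; first exact: Phi_ge0.
    by move=> x Thx; rewrite abs_indic indicE mem_set.
  by move=> x Thx; rewrite abs_indic indicE memNset // Phi0.
apply: le_trans (weakC lam _ lam_gt0 (leb_measurable_fun_indic n_gt0 mTh) integrable) _.
rewrite EFinM -Thr; apply: le_leb_integral_support => //.
- by apply: Phi_ge0; apply: divr_ge0; lra.
- by move=> x Thx; rewrite abs_indic indicE mem_set // mulr1.
- by move=> x Thx; rewrite abs_indic indicE memNset // mulr0 mul0r Phi0.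
Qed.

Lemma weak_Lphi_growth (R : realType) (n : nat) (Rs : set 'rV[R]_n)
    (d : nat) (c c' : R) (Phi : R -> R) (k0 : nat) :
  (0 < n)%N -> 0 < c' ->
  (forall k : nat, (k0 <= k)%N ->
     exists Theta Y : set 'rV[R]_n,
       [/\ leb_measurable Theta /\ leb_measurable Y,
           (0 < leb_outer Theta < +oo)%E,
           Theta `<=` Y,
           ((c * 2%:R ^+ (d * k) * k%:R ^+ d)%:E * leb_outer Theta <= leb_outer Y)%E &
           forall x, Y x ->
             ((c' * 2%:R ^- (d * k))%:E <= max_op Rs (\1_Theta) x)%E]) ->
  Phi 0 = 0 -> (forall t, 0 <= t -> 0 <= Phi t) -> weak_Lphi Rs Phi ->
  exists K, 0 < K /\ forall k, (k0 <= k)%N ->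
    c * 2%:R ^+ (d * k) * k%:R ^+ d <= Phi (K * 2%:R ^+ (d * k)).
Proof.
move=> n_gt0 c'_gt0 extremal Phi0 Phi_ge0 weak.
have [C [C_gt0 weakC]] := weak_Lphi_indic n_gt0 Phi0 Phi_ge0 weak.
exists (C * 2 / c'); split; first by apply: divr_gt0 => //; lra.
move=> k k0_le_k.
have [Th [Y [[mTh _] /andP[Th_gt0 Th_fin] _ YTh MY]]] := extremal k k0_le_k.
have pow_gt0 : 0 < 2%:R ^+ (d * k) :> R by apply: exprn_gt0.
have e_gt0 : 0 < c' * 2%:R ^- (d * k) by apply: mulr_gt0; rewrite ?invr_gt0.
set lam := c' * 2%:R ^- (d * k) / 2.
have lam_gt0 : 0 < lam by rewrite /lam; lra.
move: Th_gt0 Th_fin YTh; case Thr: (leb_outer Th) => [r| |] // r_gt0 _ YTh.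
have Y_le : (leb_outer Y <= leb_outer [set x | (lam%:E < max_op Rs \1_Th x)%E])%E.
  apply: le_leb_outer => x Yx; apply: lt_le_trans (MY x Yx).
  by rewrite lte_fin /lam; lra.
have := le_trans YTh (le_trans Y_le (weakC Th r lam mTh Thr lam_gt0)).
rewrite -EFinM lee_fin ler_pM2r -?lte_fin //.
suff -> : C / lam = C * 2 / c' * 2%:R ^+ (d * k) by [].
by rewrite /lam; field; rewrite !lt0r_neq0.
Qed.

Lemma orlicz_ge0 (R : realType) (Phi : R -> R) :
  orlicz Phi -> forall t, 0 <= t -> 0 <= Phi t.
Proof. by move=> [Phi0 Phi_mono _] t t_ge0; rewrite -Phi0; apply: Phi_mono. Qed.

Lemma orlicz_id (R : realType) : orlicz (@id R).
Proof. by split. Qed.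

Lemma little_o_Phi_d_id (R : realType) (d : nat) :
  (0 < d)%N -> little_o_Phi_d d (@id R).
Proof.
move=> d_gt0 eps eps_gt0; exists (expR (1 + eps^-1)) => t tT.
have t_gt0 : 0 < t := lt_le_trans (expR_gt0 _) tT.
have epsV_gt0 : 0 < eps^-1 by rewrite invr_gt0.
have ln_ge : 1 + eps^-1 <= ln t.
  by rewrite -[X in X <= _]expRK ler_ln ?posrE ?expR_gt0.
have logp_ge : eps^-1 <= logp t ^+ d.
  have logp_ge1 : 1 <= logp t by rewrite /logp le_max; apply/orP; left; lra.
  apply: le_trans (ler_eXnr d_gt0 logp_ge1); rewrite /logp le_max; apply/orP; left; lra.
have L_ge0 : 0 <= logp t ^+ d := le_trans (ltW epsV_gt0) logp_ge.
have : t <= t * (eps * logp t ^+ d).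
  by rewrite ler_peMr ?(ltW t_gt0) // -(mulfV (lt0r_neq0 eps_gt0)) ler_pM2l.
have := mulr_gt0 eps_gt0 t_gt0.
by rewrite /Phi_d /= !ger0_norm; nra.
Qed.

Lemma logp_mul_pow2_le (R : realType) (K : R) (d k : nat) :
  0 < K -> (1 <= k)%N ->
  logp (K * 2%:R ^+ (d * k)) <= k%:R * (`|ln K| + d%:R * ln 2).
Proof.
move=> K_gt0 k_ge1; have k1 : 1 <= k%:R :> R by rewrite ler1n.
have ln2_ge0 : 0 <= ln (2 : R) by apply/ltW/ln_gt0; lra.
have lnK_le : ln K <= k%:R * `|ln K|.
  by apply: le_trans (ler_norm _) _; rewrite ler_peMl.
rewrite /logp ge_max; apply/andP; split; last first.
  by apply: mulr_ge0; [lra | apply: addr_ge0 => //; apply: mulr_ge0].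
rewrite lnM ?posrE ?exprn_gt0 // lnXn // mulrnA -(mulr_natl (ln 2) d).
rewrite -(mulr_natl (d%:R * ln 2) k) mulrDr.
lra.
Qed.

(* With L := |ln K| + d ln 2 and t := K 2^dk one gets Phi_d(t) <= t k^d (1 + L^d),
   so eps := c / (2 K (1 + L^d)) in the little-o hypothesis does the job. *)
Lemma little_o_Phi_d_pow2_lt (R : realType) (d : nat) (Phi : R -> R)
    (c K : R) (k0 : nat) :
  (0 < d)%N -> 0 < c -> 0 < K -> little_o_Phi_d d Phi ->
  exists2 k, (k0 <= k)%N &
    Phi (K * 2%:R ^+ (d * k)) < c * 2%:R ^+ (d * k) * k%:R ^+ d.
Proof.
move=> d_gt0 c_gt0 K_gt0 oPhi.
set L := `|ln K| + d%:R * ln 2.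
have L_ge0 : 0 <= L.
  by apply: addr_ge0 => //; apply: mulr_ge0 => //; apply/ltW/ln_gt0; lra.
have Ld_ge0 : 0 <= L ^+ d := exprn_ge0 _ L_ge0.
have eps_gt0 : 0 < c / (2 * K * (1 + L ^+ d)) by apply: divr_gt0 => //; nra.
have [T oT] := oPhi _ eps_gt0.
set k := maxn (maxn k0 1) (Num.truncn (T / K)).+1.
have k0_le_k : (k0 <= k)%N by rewrite !leq_max leqnn.
have k_ge1 : (1 <= k)%N by rewrite !leq_max leqnn orbT.
have T_lt : T / K < k%:R.
  by apply: lt_le_trans (truncnS_gt _) _; rewrite ler_nat leq_maxr.
exists k => //.
have logp_le := logp_mul_pow2_le d K_gt0 k_ge1.
set P := 2%:R ^+ (d * k) : R in logp_le *; set t := K * P in logp_le *.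
have P_gt0 : 0 < P by apply: exprn_gt0.
have k_le_P : k%:R <= P.
  rewrite /P -natrX ler_nat; apply/ltnW/(leq_trans (ltn_expl k (isT : (1 < 2)%N))).
  by apply: leq_pexp2l => //; rewrite leq_pmull.
have T_le_t : T <= t.
  move: T_lt; rewrite ltr_pdivrMr // => T_lt.
  have : K * k%:R <= K * P by rewrite ler_pM2l.
  by rewrite /t; lra.
have t_gt0 : 0 < t by apply: mulr_gt0.
have logp_ge0 : 0 <= logp t by rewrite /logp le_max lexx orbT.
set kd := k%:R ^+ d : R.
have kd_ge1 : 1 <= kd by apply: exprn_ege1; rewrite ler1n.
have logpd_le : logp t ^+ d <= kd * L ^+ d.
  by rewrite -exprMn; apply: lerXn2r; rewrite ?nnegrE //; apply: mulr_ge0 => //; lra.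
have Phi_d_le : `|Phi_d d t| <= t * (kd * (1 + L ^+ d)).
  rewrite /Phi_d ger0_norm; last first.
    by apply: mulr_ge0; [lra | apply: addr_ge0 => //; apply: exprn_ge0].
  by rewrite ler_pM2l // mulrDr mulr1 lerD.
have eps_bound : c / (2 * K * (1 + L ^+ d)) * (t * (kd * (1 + L ^+ d))) = c * P * kd / 2.
  by rewrite /t; field; rewrite !lt0r_neq0 //; lra.
have := oT t T_le_t; have := ler_norm (Phi t).
have := ler_wpM2l (ltW eps_gt0) Phi_d_le; rewrite eps_bound.
have : 0 < c * P * kd by apply: mulr_gt0; [apply: mulr_gt0 | lra].
lra.
Qed.

Theorem mainTheorem1 (R : realType) (n : nat) (Rs : set 'rV[R]_n)
    (d : nat) (c c' : R) :
  (2 <= n)%N ->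
  (forall alpha, Rs alpha -> standard_rect alpha /\ dyadic_rect alpha) ->
  (1 <= d)%N -> (d <= n - 1)%N -> 0 < c -> 1 <= c' ->
  (exists k0 : nat, forall k : nat, (k0 <= k)%N ->
     exists Theta Y : set 'rV[R]_n,
       [/\ leb_measurable Theta /\ leb_measurable Y,
           (0 < leb_outer Theta < +oo)%E,
           Theta `<=` Y,
           ((c * 2%:R ^+ (d * k) * k%:R ^+ d)%:E * leb_outer Theta <= leb_outer Y)%E &
           forall x, Y x ->
             ((c' * 2%:R ^- (d * k))%:E <= max_op Rs (\1_Theta) x)%E]) ->
  (forall Phi : R -> R, orlicz Phi -> little_o_Phi_d d Phi ->
     ~ weak_Lphi Rs Phi)
  /\ ~ weak_Lphi Rs id.
Proof.
move=> n_ge2 _ d_gt0 _ c_gt0 c'_ge1 [k0 extremal].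
have n_gt0 : (0 < n)%N by apply: leq_trans n_ge2.
have c'_gt0 : 0 < c' by lra.
have not_weak Phi : orlicz Phi -> little_o_Phi_d d Phi -> ~ weak_Lphi Rs Phi.
  move=> orlicz_Phi o_Phi weak; have [Phi0 _ _] := orlicz_Phi.
  have [K [K_gt0 growth]] :=
    weak_Lphi_growth n_gt0 c'_gt0 extremal Phi0 (orlicz_ge0 orlicz_Phi) weak.
  have [k k0_le_k] := little_o_Phi_d_pow2_lt k0 d_gt0 c_gt0 K_gt0 o_Phi.
  by rewrite ltNge growth.
by split; [exact: not_weak | exact: not_weak _ (orlicz_id R) (little_o_Phi_d_id d_gt0)].
Qed.
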